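(* Let $V_1=\langle\lambda_{12},\lambda_{21}\rangle$ and let $V_2^*$ be the normal closure in $VP_3$ of $V_2=\langle\lambda_{13},\lambda_{23},\lambda_{31},\lambda_{32}\rangle$. Then $V_2^*$ is a free group, freely generated by $\lambda_{13}$, $\lambda_{23}$, all elements $\lambda_{31}^v$ where $v$ ranges over the empty word and the reduced words in $\lambda_{12}^{\pm1},\lambda_{21}^{\pm1}$ beginning with a nonzero power of $\lambda_{21}$, and all elements $\lambda_{32}^u$ where $u$ ranges over the empty word and the reduced words in $\lambda_{12}^{\pm1},\lambda_{21}^{\pm1}$ beginning with a nonzero power of $\lambda_{12}$.
   Context: Notation: $a^b=b^{-1}ab$. The virtual braid group $VB_3$ has generators $\sigma_1,\sigma_2,\rho_1,\rho_2$ and defining relations $\sigma_1\sigma_2\sigma_1=\sigma_2\sigma_1\sigma_2$, $\rho_1\rho_2\rho_1=\rho_2\rho_1\rho_2$, $\rho_1^2=\rho_2^2=1$, $\rho_1\rho_2\sigma_1=\sigma_2\rho_1\rho_2$. $VP_3$ is the kernel of the homomorphism $VB_3\to S_3$ sending $\sigma_i,\rho_i$ to $(i,i+1)$. Define $\lambda_{12}=\rho_1\sigma_1^{-1}$, $\lambda_{21}=\sigma_1^{-1}\rho_1$, $\lambda_{23}=\rho_2\sigma_2^{-1}$, $\lambda_{32}=\sigma_2^{-1}\rho_2$, $\lambda_{13}=\rho_2\lambda_{12}\rho_2$, $\lambda_{31}=\rho_2\lambda_{21}\rho_2$. The group $V_1$ is free on $\lambda_{12},\lambda_{21}$. *)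

(* VB_3 is presented as words in the generators modulo the
   congruence generated by free cancellation and the defining relators. *)
From Stdlib Require Import List Bool.
Import ListNotations.

Inductive gen := s1 | s2 | r1 | r2.

(* a letter (g, e): e = false means g, e = true means g^{-1} *)
Definition letter := (gen * bool)%type.
Definition word := list letter.

Definition flip (x : letter) : letter := (fst x, negb (snd x)).
Definition inv_word (w : word) : word := rev (map flip w).
Definition G (g : gen) : word := [(g, false)].
Definition Gi (g : gen) : word := [(g, true)].

Definition relators : list word :=
  [ G s1 ++ G s2 ++ G s1 ++ inv_word (G s2 ++ G s1 ++ G s2);
    G r1 ++ G r2 ++ G r1 ++ inv_word (G r2 ++ G r1 ++ G r2);
    G r1 ++ G r1;
    G r2 ++ G r2;
    G r1 ++ G r2 ++ G s1 ++ inv_word (G s2 ++ G r1 ++ G r2) ].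

Inductive vb_eq : word -> word -> Prop :=
| vb_refl w : vb_eq w w
| vb_sym u v : vb_eq u v -> vb_eq v u
| vb_trans u v w : vb_eq u v -> vb_eq v w -> vb_eq u w
| vb_cancel u x v : vb_eq (u ++ [x; flip x] ++ v) (u ++ v)
| vb_rel u r v : In r relators -> vb_eq (u ++ r ++ v) (u ++ v).

Definition swap (a b k : nat) : nat :=
  if Nat.eqb k a then b else if Nat.eqb k b then a else k.
Definition gen_perm (g : gen) : nat -> nat :=
  match g with s1 | r1 => swap 0 1 | s2 | r2 => swap 1 2 end.
Definition word_perm (w : word) : nat -> nat :=
  fold_right (fun x f => fun k => f (gen_perm (fst x) k)) (fun k => k) w.

Definition in_VP3 (w : word) : Prop := forall k, k < 3 -> word_perm w k = k.

(* conjugation a^b = b^{-1} a b *)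
Definition conj (a b : word) : word := inv_word b ++ a ++ b.

Definition lam12 : word := G r1 ++ Gi s1.
Definition lam21 : word := Gi s1 ++ G r1.
Definition lam23 : word := G r2 ++ Gi s2.
Definition lam32 : word := Gi s2 ++ G r2.
Definition lam13 : word := G r2 ++ lam12 ++ G r2.
Definition lam31 : word := G r2 ++ lam21 ++ G r2.

Definition pw (w : word) (e : bool) : word := if e then inv_word w else w.

Definition V2_gens : list word := [lam13; lam23; lam31; lam32].

Inductive in_V2star : word -> Prop :=
| v2s_nil : in_V2star []
| v2s_cons w h e g : in_V2star w -> In h V2_gens -> in_VP3 g ->
    in_V2star (w ++ conj (pw h e) g)
| v2s_eq u v : vb_eq u v -> in_V2star u -> in_V2star v.

(* words in lam12^{+-1}, lam21^{+-1}: letter (b, e), b = false : lam12,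
   b = true : lam21; e = true : inverse *)
Definition fword := list (bool * bool).
Definition eval_f (v : fword) : word :=
  flat_map (fun x : bool * bool => pw (if fst x then lam21 else lam12) (snd x)) v.

Fixpoint reduced {A : Type} (l : list (A * bool)) : Prop :=
  match l with
  | [] => True
  | x :: l' =>
      match l' with
      | [] => True
      | y :: _ => ~ (fst x = fst y /\ snd x <> snd y) /\ reduced l'
      end
  end.

Inductive idx :=
| I13 | I23
| I31 (v : fword)
| I32 (u : fword).

Definition begins_with (b : bool) (v : fword) : Prop :=
  match v with [] => True | x :: _ => fst x = b end.

Definition valid_idx (i : idx) : Prop :=
  match i with
  | I13 | I23 => True
  | I31 v => reduced v /\ begins_with true v
  | I32 u => reduced u /\ begins_with false u
  end.

Definition basis (i : idx) : word :=
  match i with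
  | I13 => lam13
  | I23 => lam23
  | I31 v => conj lam31 (eval_f v)
  | I32 u => conj lam32 (eval_f u)
  end.

Definition eval_idx (l : list (idx * bool)) : word :=
  flat_map (fun x : idx * bool => pw (basis (fst x)) (snd x)) l.

(* Reidemeister-Schreier, made effective.  Every element of VB_3 has the form
   v x p with v in V_1 = F(lam12, lam21), x a word in the proposed basis and
   p one of the six rho-permutation words.  Right multiplication by a letter
   of VB_3 is computed on such triples: p z = lam p' with lam some lam_ij,
   and conjugation by lam12, lam21 acts on the basis by explicit free-group
   automorphisms phi.  Every defining relator acts trivially, so this is an
   action of VB_3 on triples with v and x reduced.  Acting on the trivial
   triple, a nonempty reduced basis word yields itself, hence is nontrivial;
   an element of the normal closure of V_2 yields (1, x, 1), whose x expresses
   it in the basis.  The finitely many group identities this needs are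
   checked by evaluating rewriting certificates. *)

From Stdlib Require Import List Bool Arith Lia Setoid.
Import ListNotations.

Lemma vb_eq_app_r u v t : vb_eq u v -> vb_eq (u ++ t) (v ++ t).
Proof.
  induction 1.
  - apply vb_refl.
  - apply vb_sym; assumption.
  - eapply vb_trans; eassumption.
  - rewrite <- !app_assoc. apply vb_cancel.
  - rewrite <- !app_assoc. apply vb_rel; assumption.
Qed.

Lemma vb_eq_app_l u v t : vb_eq u v -> vb_eq (t ++ u) (t ++ v).
Proof.
  induction 1.
  - apply vb_refl.
  - apply vb_sym; assumption.
  - eapply vb_trans; eassumption.
  - rewrite !(app_assoc t u). apply vb_cancel.
  - rewrite !(app_assoc t u). apply vb_rel; assumption.
Qed.

Add Parametric Relation : word vb_eq
  reflexivity proved by vb_refl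
  symmetry proved by vb_sym
  transitivity proved by vb_trans as vb_eq_setoid.

Add Parametric Morphism : (@app letter) with signature vb_eq ==> vb_eq ==> vb_eq as app_vb_eq.
Proof.
  intros u u' Hu v v' Hv. transitivity (u' ++ v).
  - apply vb_eq_app_r, Hu.
  - apply vb_eq_app_l, Hv.
Qed.

Lemma flip_involutive x : flip (flip x) = x.
Proof. destruct x; unfold flip; simpl; rewrite negb_involutive; reflexivity. Qed.

Lemma inv_word_app u v : inv_word (u ++ v) = inv_word v ++ inv_word u.
Proof. unfold inv_word; rewrite map_app, rev_app_distr; reflexivity. Qed.

Lemma inv_word_involutive u : inv_word (inv_word u) = u.
Proof.
  unfold inv_word; rewrite map_rev, rev_involutive, map_map.
  erewrite map_ext; [apply map_id | intro; apply flip_involutive].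
Qed.

Lemma vb_app_inv_r w : vb_eq (w ++ inv_word w) [].
Proof.
  induction w as [|x w IH]; [reflexivity|].
  unfold inv_word in *; simpl. rewrite app_assoc.
  change (x :: (w ++ rev (map flip w)) ++ [flip x])
    with ([x] ++ (w ++ rev (map flip w)) ++ [flip x]).
  rewrite IH. exact (vb_cancel [] x []).
Qed.

Lemma vb_app_inv_l w : vb_eq (inv_word w ++ w) [].
Proof. rewrite <- (inv_word_involutive w) at 2. apply vb_app_inv_r. Qed.

Add Parametric Morphism : inv_word with signature vb_eq ==> vb_eq as inv_word_vb_eq.
Proof.
  intros u v H. transitivity (inv_word u ++ v ++ inv_word v).
  - rewrite vb_app_inv_r, app_nil_r; reflexivity.
  - transitivity (inv_word u ++ u ++ inv_word v).
    + apply vb_eq_app_l, vb_eq_app_r, vb_sym, H.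
    + rewrite app_assoc, vb_app_inv_l; reflexivity.
Qed.

Lemma pw_negb w e : pw w (negb e) = inv_word (pw w e).
Proof. destruct e; simpl; [rewrite inv_word_involutive|]; reflexivity. Qed.

Definition vb_trivial (r : word) : Prop := vb_eq r [].

Lemma vb_trivial_insert u v r : vb_trivial r -> vb_eq (u ++ r ++ v) (u ++ v).
Proof. intro H; unfold vb_trivial in H; rewrite H; reflexivity. Qed.

Lemma relator_trivial r : In r relators -> vb_trivial r.
Proof. intro H; pose proof (vb_rel [] r [] H) as K; rewrite !app_nil_r in K; exact K. Qed.

Lemma vb_trivial_rotate a b : vb_trivial (a ++ b) -> vb_trivial (b ++ a).
Proof.
  unfold vb_trivial; intro H.
  transitivity (b ++ (a ++ b) ++ inv_word b).
  - replace (b ++ (a ++ b) ++ inv_word b) with ((b ++ a) ++ (b ++ inv_word b))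
      by (rewrite !app_assoc; reflexivity).
    rewrite vb_app_inv_r, app_nil_r; reflexivity.
  - rewrite H; apply vb_app_inv_r.
Qed.

(** * Rewriting certificates *)

Definition rotations (r : word) : list word :=
  map (fun k => skipn k r ++ firstn k r) (seq 0 (length r)).
Definition symmetrize (rs : list word) : list word :=
  flat_map (fun r => rotations r ++ rotations (inv_word r)) rs.

Lemma rotations_trivial r : vb_trivial r -> Forall vb_trivial (rotations r).
Proof.
  intro H; unfold rotations; apply Forall_forall; intros w Hw.
  apply in_map_iff in Hw; destruct Hw as [k [<- _]].
  apply vb_trivial_rotate; rewrite firstn_skipn; exact H.
Qed.

Lemma symmetrize_trivial rs : Forall vb_trivial rs -> Forall vb_trivial (symmetrize rs).
Proof.
  induction 1 as [|r rs Hr _ IH]; simpl; [constructor|].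
  apply Forall_app; split; [apply Forall_app; split|exact IH].
  - apply rotations_trivial, Hr.
  - apply rotations_trivial. unfold vb_trivial in *. rewrite Hr. reflexivity.
Qed.

Class EqDecision (A : Type) := eq_dec : forall a b : A, {a = b} + {a <> b}.

#[export] Instance gen_eq_decision : EqDecision gen.
Proof. intros a b; decide equality. Defined.
#[export] Instance bool_eq_decision : EqDecision bool := bool_dec.
#[export] Instance nat_eq_decision : EqDecision nat := Nat.eq_dec.
#[export] Instance prod_eq_decision {A B} `{EqDecision A} `{EqDecision B} : EqDecision (A * B).
Proof. intros x y; decide equality; apply eq_dec. Defined.
#[export] Instance list_eq_decision {A} `{EqDecision A} : EqDecision (list A) := list_eq_dec eq_dec.

Definition is_rho (g : gen) : bool := match g with r1 | r2 => true | _ => false end.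

(* Canonical forms modulo free cancellation and rho_i^2 = 1; [canon_push]
   pushes a letter onto a reversed canonical word. *)
Definition normalize_rho (x : letter) : letter := if is_rho (fst x) then (fst x, false) else x.
Definition canon_push (x : letter) (s : word) : word :=
  let x' := normalize_rho x in
  match s with
  | h :: s' => if eq_dec h (flip x') then s'
               else if is_rho (fst x') && (if eq_dec h x' then true else false) then s'
               else x' :: s
  | [] => [x']
  end.
Definition canon (w : word) : word := rev (fold_left (fun s x => canon_push x s) w []).

Lemma rho_square_trivial g : is_rho g = true -> vb_trivial [(g, false); (g, false)].
Proof.
  intro E; apply relator_trivial. destruct g; try discriminate; simpl; tauto.
Qed.

Lemma normalize_rho_vb_eq x : vb_eq [x] [normalize_rho x].
Proof.
  destruct x as [g [|]]; unfold normalize_rho; simpl; destruct (is_rho g) eqn:E; try reflexivity.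
  transitivity ([(g, true)] ++ [(g, false); (g, false)] ++ []).
  - symmetry; apply vb_trivial_insert, rho_square_trivial, E.
  - exact (vb_cancel [] (g, true) [(g, false)]).
Qed.

Lemma canon_push_vb_eq s x w : vb_eq (rev s ++ x :: w) (rev (canon_push x s) ++ w).
Proof.
  transitivity (rev s ++ [normalize_rho x] ++ w).
  { change (x :: w) with ([x] ++ w). rewrite normalize_rho_vb_eq. reflexivity. }
  assert (Hrho : is_rho (fst (normalize_rho x)) = true -> snd (normalize_rho x) = false).
  { destruct x as [g b]; unfold normalize_rho; simpl.
    destruct (is_rho g) eqn:E; simpl; intro; congruence. }
  unfold canon_push. set (x' := normalize_rho x) in *. clearbody x'.
  destruct s as [|h s']; [reflexivity|]. simpl rev.
  destruct (eq_dec h (flip x')) as [->|_].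
  { rewrite <- app_assoc. pose proof (vb_cancel (rev s') (flip x') w) as K.
    rewrite flip_involutive in K. exact K. }
  destruct (is_rho (fst x')) eqn:R; [destruct (eq_dec h x') as [->|_]|]; simpl.
  - rewrite <- app_assoc. destruct x' as [g b]; simpl in *. rewrite (Hrho eq_refl).
    apply (vb_trivial_insert _ _ [_; _]), rho_square_trivial, R.
  - rewrite <- !app_assoc; reflexivity.
  - rewrite <- !app_assoc; reflexivity.
Qed.

Lemma canon_vb_eq w : vb_eq w (canon w).
Proof.
  enough (K : forall s, vb_eq (rev s ++ w) (rev (fold_left (fun s x => canon_push x s) w s)))
    by exact (K []).
  induction w as [|x w IH]; intro s; simpl.
  - rewrite app_nil_r; reflexivity.
  - rewrite canon_push_vb_eq, IH. reflexivity.
Qed.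

(* A certificate is a list of pairs (position, index into the pool RR): insert
   that relator at that position and recompute the canonical form. *)
Definition insert_at (n : nat) (r w : word) : word := firstn n w ++ r ++ skipn n w.
Definition rewrite_with (RR : list word) (st : list (nat * nat)) (w : word) : word :=
  fold_left (fun w p => canon (insert_at (fst p) (nth (snd p) RR []) w)) st (canon w).
Definition certifies (RR : list word) (st : list (nat * nat)) (A B : word) : bool :=
  if eq_dec (rewrite_with RR st A) (canon B) then true else false.

Lemma rewrite_with_vb_eq RR st w : Forall vb_trivial RR -> vb_eq w (rewrite_with RR st w).
Proof.
  intro HR. unfold rewrite_with. generalize (canon w) (canon_vb_eq w).
  induction st as [|[n k] st IH]; intros w0 H; cbn [fold_left fst snd]; [exact H|].
  apply IH. rewrite <- canon_vb_eq. unfold insert_at.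
  assert (Ht : vb_trivial (nth k RR [])).
  { destruct (Nat.lt_ge_cases k (length RR)).
    - eapply Forall_forall; [exact HR | apply nth_In; assumption].
    - rewrite nth_overflow by assumption. apply vb_refl. }
  rewrite vb_trivial_insert by exact Ht. rewrite firstn_skipn. exact H.
Qed.

Lemma certifies_vb_eq RR st A B :
  Forall vb_trivial RR -> certifies RR st A B = true -> vb_eq A B.
Proof.
  intros HR H. unfold certifies in H. destruct (eq_dec _ _) as [E|]; [|discriminate].
  rewrite (rewrite_with_vb_eq RR st A HR), E, <- canon_vb_eq. reflexivity.
Qed.

Definition relator_pool (extra : list word) : list word :=
  symmetrize relators ++ symmetrize extra.

Lemma relator_pool_trivial extra :
  Forall vb_trivial extra -> Forall vb_trivial (relator_pool extra).
Proof.
  intro H. apply Forall_app; split; apply symmetrize_trivial; [|exact H].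
  apply Forall_forall, relator_trivial.
Qed.

Definition equation_relator (e : word * word) : word := fst e ++ inv_word (snd e).

Fixpoint certify_chain (known : list word) (eqs : list (word * word))
    (certs : list (list (nat * nat))) : bool :=
  match eqs, certs with
  | [], _ => true
  | e :: eqs', st :: certs' =>
      certifies (relator_pool known) st (fst e) (snd e)
      && certify_chain (known ++ [equation_relator e]) eqs' certs'
  | _ :: _, [] => false
  end.

Lemma certify_chain_sound known eqs certs :
  Forall vb_trivial known -> certify_chain known eqs certs = true ->
  Forall vb_trivial (known ++ map equation_relator eqs).
Proof.
  revert known certs; induction eqs as [|e eqs IH]; intros known [|st certs] Hk H;
    simpl in H; try discriminate; rewrite ?app_nil_r; try exact Hk.
  apply andb_prop in H as [He H].
  assert (Te : vb_trivial (equation_relator e)).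
  { unfold vb_trivial, equation_relator.
    rewrite (certifies_vb_eq _ _ _ _ (relator_pool_trivial _ Hk) He). apply vb_app_inv_r. }
  specialize (IH (known ++ [equation_relator e]) certs).
  rewrite <- app_assoc in IH. apply IH, H.
  apply Forall_app; split; [exact Hk | constructor; [exact Te | constructor]].
Qed.

(* The defining relations lam_ij lam_ik lam_jk = lam_jk lam_ik lam_ij of VP_3. *)
Definition vp_equations : list (word * word) :=
  [ (lam12 ++ lam13 ++ lam23, lam23 ++ lam13 ++ lam12);
    (lam21 ++ lam23 ++ lam13, lam13 ++ lam23 ++ lam21);
    (lam13 ++ lam12 ++ lam32, lam32 ++ lam12 ++ lam13);
    (lam23 ++ lam21 ++ lam31, lam31 ++ lam21 ++ lam23);
    (lam31 ++ lam32 ++ lam12, lam12 ++ lam32 ++ lam31);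
    (lam32 ++ lam31 ++ lam21, lam21 ++ lam31 ++ lam32) ].

Definition vp_certificates : list (list (nat * nat)) :=
  [ [(5,39); (1,35); (5,37); (3,9); (4,39); (0,13); (4,13); (1,37)];
    [(1,13); (3,41); (4,12); (4,37); (0,75); (0,13); (2,41); (3,12); (3,37)];
    [(0,61)];
    [(0,12); (3,41); (7,37); (8,13); (1,61); (0,40); (2,12); (5,12); (7,37)];
    [(0,93)];
    [(0,157)] ].

Definition vp_relators : list word := map equation_relator vp_equations.

Lemma vp_relators_trivial : Forall vb_trivial vp_relators.
Proof.
  apply (certify_chain_sound [] vp_equations vp_certificates (Forall_nil _)).
  vm_compute. reflexivity.
Qed.

Definition vp_pool : list word := relator_pool vp_relators.

Lemma vp_pool_trivial : Forall vb_trivial vp_pool.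
Proof. apply relator_pool_trivial, vp_relators_trivial. Qed.

(** * Free reduction *)

Section FreeReduction.
Context {A : Type} `{EqDecision A}.
Implicit Types (s u v w l : list (A * bool)) (x y h : A * bool).

Definition fflip x : A * bool := (fst x, negb (snd x)).

(* Reduced words are kept reversed, as stacks: [fpush x s] multiplies the
   reversed reduced word [s] by [x] on the right. *)
Definition fpush x s : list (A * bool) :=
  match s with h :: s' => if eq_dec h (fflip x) then s' else x :: s | [] => [x] end.
Definition freduce s w : list (A * bool) := fold_left (fun s x => fpush x s) w s.
Definition finv w : list (A * bool) := rev (map fflip w).
Definition feq u v : Prop := freduce [] u = freduce [] v.

Fixpoint reducedb s : bool :=
  match s with
  | x :: ((y :: _) as s') => if eq_dec y (fflip x) then false else reducedb s'
  | _ => true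
  end.

Lemma fflip_involutive x : fflip (fflip x) = x.
Proof. destruct x; unfold fflip; simpl; rewrite negb_involutive; reflexivity. Qed.

Lemma reduced_cons2 x y l : reduced (x :: y :: l) <-> y <> fflip x /\ reduced (y :: l).
Proof.
  destruct x as [a b], y as [c d]; unfold fflip; simpl.
  assert (K : ~ (a = c /\ b <> d) <-> (c, d) <> (a, negb b)).
  { split.
    - intros N E; inversion E; subst. apply N; split; auto. destruct b; discriminate.
    - intros N [E1 E2]; subst. apply N. destruct b, d; simpl; congruence. }
  destruct l; tauto.
Qed.

Lemma reduced_tail x l : reduced (x :: l) -> reduced l.
Proof. destruct l; simpl; tauto. Qed.

Lemma reducedb_spec s : reducedb s = true <-> reduced s.
Proof.
  induction s as [|x [|y s] IH]; [simpl; tauto | simpl; tauto |].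
  rewrite reduced_cons2, <- IH. simpl.
  destruct (eq_dec y (fflip x)) as [E|E].
  - split; [discriminate | intros [N _]; contradiction].
  - split; [intro; split; assumption | intros [_ R]; exact R].
Qed.

Lemma fpush_reduced x s : reduced s -> reduced (fpush x s).
Proof.
  destruct s as [|h s']; simpl; [trivial|].
  destruct (eq_dec h (fflip x)) as [E|E]; intro R.
  - eapply reduced_tail; eassumption.
  - apply reduced_cons2; split; assumption.
Qed.

Lemma fpush_fflip x s : reduced s -> fpush (fflip x) (fpush x s) = s.
Proof.
  intro R. destruct s as [|h s']; simpl.
  - rewrite fflip_involutive. destruct (eq_dec x x); congruence.
  - destruct (eq_dec h (fflip x)) as [->|E].
    + destruct s' as [|h2 s'']; simpl; [reflexivity|].
      apply reduced_cons2 in R as [R1 _].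
      destruct (eq_dec h2 (fflip (fflip x))); [|reflexivity].
      rewrite fflip_involutive in *. contradiction.
    + simpl. rewrite fflip_involutive. destruct (eq_dec x x); congruence.
Qed.

Lemma freduce_app s u v : freduce s (u ++ v) = freduce (freduce s u) v.
Proof. apply fold_left_app. Qed.

Lemma freduce_reduced s w : reduced s -> reduced (freduce s w).
Proof.
  revert s; induction w as [|x w IH]; intros s R; [exact R|].
  apply IH, fpush_reduced, R.
Qed.

Lemma freduce_nil_reduced w : reduced (freduce [] w).
Proof. apply freduce_reduced; simpl; trivial. Qed.

Lemma freduce_rev_reduced s : reduced s -> freduce [] (rev s) = s.
Proof.
  induction s as [|h s IH]; intro R; [reflexivity|]. simpl.
  rewrite freduce_app, IH by (eapply reduced_tail; eassumption). simpl.
  destruct s as [|h2 s]; [reflexivity|].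
  apply reduced_cons2 in R as [R1 _]. unfold fpush.
  destruct (eq_dec h2 (fflip h)); [contradiction | reflexivity].
Qed.

Lemma freduce_rev_freduce s w : reduced s -> freduce s w = freduce s (rev (freduce [] w)).
Proof.
  intro R. induction w as [|x w IH] using rev_ind; [reflexivity|].
  rewrite !freduce_app, IH. simpl.
  destruct (freduce [] w) as [|h t']; [reflexivity|]. simpl.
  destruct (eq_dec h (fflip x)) as [->|_].
  - rewrite freduce_app; simpl.
    pose proof (fpush_fflip (fflip x) (freduce s (rev t')) (freduce_reduced _ _ R)) as K.
    rewrite fflip_involutive in K. exact K.
  - simpl. rewrite !freduce_app; reflexivity.
Qed.

Lemma finv_app u v : finv (u ++ v) = finv v ++ finv u.
Proof. unfold finv; rewrite map_app, rev_app_distr; reflexivity. Qed.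

Lemma finv_involutive w : finv (finv w) = w.
Proof.
  unfold finv; rewrite map_rev, rev_involutive, map_map.
  erewrite map_ext; [apply map_id | intro; apply fflip_involutive].
Qed.

Lemma freduce_app_finv s w : reduced s -> freduce s (w ++ finv w) = s.
Proof.
  revert s; induction w as [|x w IH]; intros s R; [reflexivity|].
  unfold finv; simpl. rewrite app_assoc, freduce_app. fold (finv w).
  rewrite IH by (apply fpush_reduced, R). apply fpush_fflip, R.
Qed.

Lemma freduce_finv_app s w : reduced s -> freduce s (finv w ++ w) = s.
Proof. intro R. rewrite <- (finv_involutive w) at 2. apply freduce_app_finv, R. Qed.

Lemma freduce_feq s u v : reduced s -> feq u v -> freduce s u = freduce s v.
Proof.
  intros R E. rewrite (freduce_rev_freduce s u R), (freduce_rev_freduce s v R), E.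
  reflexivity.
Qed.

Lemma feq_app u u' v v' : feq u u' -> feq v v' -> feq (u ++ v) (u' ++ v').
Proof.
  unfold feq; intros E1 E2. rewrite !freduce_app, E1.
  apply freduce_feq; [apply freduce_nil_reduced | exact E2].
Qed.

Lemma feq_rev_freduce w : feq (rev (freduce [] w)) w.
Proof. apply freduce_rev_reduced, freduce_nil_reduced. Qed.

Lemma feq_finv u v : feq u v -> feq (finv u) (finv v).
Proof.
  unfold feq; intro E.
  transitivity (freduce [] (finv u ++ v ++ finv v)).
  - rewrite freduce_app, freduce_app_finv by apply freduce_nil_reduced. reflexivity.
  - rewrite app_assoc, freduce_app, (freduce_app [] (finv u) v).
    rewrite (freduce_feq _ v u) by (apply freduce_nil_reduced || (symmetry; exact E)).
    rewrite <- (freduce_app [] (finv u) u), freduce_finv_app; simpl; trivial.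
Qed.

Lemma fpush_Forall (P : A * bool -> Prop) x s : P x -> Forall P s -> Forall P (fpush x s).
Proof.
  intros Px Fs. destruct s as [|h s']; simpl; [constructor; auto|].
  destruct (eq_dec h (fflip x)); [inversion Fs; auto | constructor; auto].
Qed.

Lemma freduce_Forall (P : A * bool -> Prop) s w :
  Forall P s -> Forall P w -> Forall P (freduce s w).
Proof.
  revert s; induction w as [|x w IH]; intros s Fs Fw; [exact Fs|].
  inversion Fw; subst. apply IH; auto. apply fpush_Forall; auto.
Qed.

Lemma freduce_reduced_app s l :
  reduced l -> (match l, s with x :: _, h :: _ => x <> fflip h | _, _ => True end) ->
  freduce s l = rev l ++ s.
Proof.
  revert s; induction l as [|x l IH]; intros s R C; [reflexivity|].
  assert (E : fpush x s = x :: s).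
  { destruct s as [|h s']; simpl; auto. destruct (eq_dec h (fflip x)) as [->|]; auto.
    rewrite fflip_involutive in C. contradiction. }
  simpl. rewrite E, IH, <- app_assoc; [reflexivity | eapply reduced_tail; eassumption |].
  destruct l as [|y l]; auto. apply reduced_cons2 in R; tauto.
Qed.

Lemma freduce_reduced_eq l : reduced l -> freduce [] l = rev l.
Proof.
  intro R. rewrite freduce_reduced_app, app_nil_r; auto. destruct l; auto.
Qed.

Lemma reduced_rev l : reduced l -> reduced (rev l).
Proof. intro R. rewrite <- (freduce_reduced_eq l R). apply freduce_nil_reduced. Qed.

Definition fsubst (f : A * bool -> list (A * bool)) w : list (A * bool) := flat_map f w.
Definition inv_compatible (f : A * bool -> list (A * bool)) : Prop :=
  forall x, f (fflip x) = finv (f x).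

Lemma fsubst_app f u v : fsubst f (u ++ v) = fsubst f u ++ fsubst f v.
Proof. apply flat_map_app. Qed.

Lemma fsubst_letter f x : fsubst f [x] = f x.
Proof. apply app_nil_r. Qed.

Lemma fsubst_finv f w : inv_compatible f -> fsubst f (finv w) = finv (fsubst f w).
Proof.
  intro Hf. induction w as [|x w IH]; [reflexivity|].
  change (finv (x :: w)) with (finv w ++ [fflip x]).
  rewrite fsubst_app, IH, fsubst_letter, Hf.
  change (fsubst f (x :: w)) with (f x ++ fsubst f w). rewrite finv_app. reflexivity.
Qed.

Lemma fsubst_freduce f w : inv_compatible f -> feq (fsubst f w) (fsubst f (rev (freduce [] w))).
Proof.
  intro Hf. induction w as [|x w IH] using rev_ind; [reflexivity|].
  assert (K : feq (fsubst f (w ++ [x])) (fsubst f (rev (freduce [] w)) ++ f x)).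
  { rewrite fsubst_app, fsubst_letter. apply feq_app; [exact IH | reflexivity]. }
  unfold feq in *. rewrite K. clear K IH. rewrite (freduce_app [] w [x]).
  change (freduce (freduce [] w) [x]) with (fpush x (freduce [] w)).
  destruct (freduce [] w) as [|h t'].
  - change (rev (fpush x [])) with [x]. rewrite fsubst_letter. reflexivity.
  - unfold fpush. destruct (eq_dec h (fflip x)) as [->|_].
    + simpl rev. rewrite fsubst_app, fsubst_letter, Hf, <- app_assoc, freduce_app,
        freduce_finv_app by apply freduce_nil_reduced.
      reflexivity.
    + change (rev (x :: h :: t')) with (rev (h :: t') ++ [x]).
      rewrite fsubst_app, fsubst_letter. reflexivity.
Qed.

Lemma fsubst_feq f u v : inv_compatible f -> feq u v -> feq (fsubst f u) (fsubst f v).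
Proof.
  intros Hf E. unfold feq in *.
  rewrite (fsubst_freduce f u Hf), (fsubst_freduce f v Hf), E. reflexivity.
Qed.

Lemma fsubst_Forall (P : A * bool -> Prop) f w :
  (forall x, P x -> Forall P (f x)) -> Forall P w -> Forall P (fsubst f w).
Proof.
  intros Hf Fw. induction Fw; [constructor|].
  apply Forall_app; split; auto.
Qed.

End FreeReduction.

(** * Conjugation by lam12 and lam21 on the basis *)

#[export] Instance idx_eq_decision : EqDecision idx.
Proof. intros a b; decide equality; apply eq_dec. Defined.

Definition begins_withb (k : bool) (v : fword) : bool :=
  match v with [] => true | x :: _ => Bool.eqb (fst x) k end.
Definition conj_validb (k : bool) (v : fword) : bool := reducedb v && begins_withb k v.
Definition valid_idxb (b : idx) : bool :=
  match b with
  | I13 | I23 => true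
  | I31 v => conj_validb true v
  | I32 v => conj_validb false v
  end.

Lemma begins_withb_spec k v : begins_withb k v = true <-> begins_with k v.
Proof. destruct v; simpl; [tauto | apply Bool.eqb_true_iff]. Qed.

Lemma valid_idxb_spec i : valid_idxb i = true <-> valid_idx i.
Proof.
  destruct i as [| |v|v]; simpl; try tauto;
    unfold conj_validb; rewrite andb_true_iff, reducedb_spec, begins_withb_spec; tauto.
Qed.

Definition conj_idx (k : bool) (v : fword) : idx := if k then I31 v else I32 v.

Lemma valid_idxb_conj_idx k v : valid_idxb (conj_idx k v) = conj_validb k v.
Proof. destruct k; reflexivity. Qed.

Definition l12 : bool * bool := (false, false).
Definition l12i : bool * bool := (false, true).
Definition l21 : bool * bool := (true, false).
Definition l21i : bool * bool := (true, true).
Definition pos (b : idx) : idx * bool := (b, false).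
Definition neg (b : idx) : idx * bool := (b, true).

Definition fsnoc (v : fword) (l : bool * bool) : fword := rev (fpush l (rev v)).

(* lam31^{lam12^{+-1}} and lam32^{lam21^{+-1}} are the only conjugates of
   basis elements by a letter of V_1 that are not themselves basis elements. *)
Definition exceptional (k : bool) (v : fword) (l : bool * bool) : bool :=
  match v with [] => Bool.eqb (fst l) (negb k) | _ => false end.
Definition exceptional_image (k : bool) (l : bool * bool) : list (idx * bool) :=
  if k then
    if snd l then [neg (I32 [l12i]); pos (I31 []); pos (I32 [])]
    else [pos (I32 []); pos (I31 []); neg (I32 [l12])]
  else
    if snd l then [neg (I31 [l21i]); pos (I32 []); pos (I31 [])]
    else [pos (I31 []); pos (I32 []); neg (I31 [l21])].

Definition phi_conj (k : bool) (v : fword) (l : bool * bool) : list (idx * bool) :=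
  if conj_validb k v then
    if exceptional k v l then exceptional_image k l else [pos (conj_idx k (fsnoc v l))]
  else [pos (conj_idx k v)].

Definition phi13 (l : bool * bool) : list (idx * bool) :=
  match l with
  | (false, false) => [pos (I32 [l12]); pos I13; neg (I32 [])]
  | (false, true) => [neg (I32 []); pos I13; pos (I32 [l12i])]
  | (true, false) => [pos I23; pos I13; pos (I31 []); neg I23; neg (I31 [l21])]
  | (true, true) => [neg (I31 [l21i]); neg I23; pos (I31 []); pos I13; pos I23]
  end.
Definition phi23 (l : bool * bool) : list (idx * bool) :=
  match l with
  | (false, false) => [pos I13; pos I23; pos (I32 []); neg I13; neg (I32 [l12])]
  | (false, true) => [neg (I32 [l12i]); neg I13; pos (I32 []); pos I23; pos I13]
  | (true, false) => [pos (I31 [l21]); pos I23; neg (I31 [])]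
  | (true, true) => [neg (I31 []); pos I23; pos (I31 [l21i])]
  end.

(* [phi_idx l b] is the word in the basis equal to the conjugate b^{lam_l}
   (junk [b] itself on invalid indices). *)
Definition phi_idx (l : bool * bool) (b : idx) : list (idx * bool) :=
  match b with
  | I13 => phi13 l
  | I23 => phi23 l
  | I31 v => phi_conj true v l
  | I32 u => phi_conj false u l
  end.
Definition phi (l : bool * bool) (x : idx * bool) : list (idx * bool) :=
  if snd x then finv (phi_idx l (fst x)) else phi_idx l (fst x).

Definition phi_stack (l : bool * bool) (x : list (idx * bool)) : list (idx * bool) :=
  freduce [] (fsubst (phi l) (rev x)).
Definition phi_iter (ls : fword) (w : list (idx * bool)) : list (idx * bool) :=
  fold_left (fun w l => fsubst (phi l) w) ls w.

Lemma phi_idx_conj_idx l k v : phi_idx l (conj_idx k v) = phi_conj k v l.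
Proof. destruct k; reflexivity. Qed.

Lemma phi_inv_compatible l : inv_compatible (phi l).
Proof. intros [b []]; unfold phi; simpl; [|reflexivity]. rewrite finv_involutive; reflexivity. Qed.

Lemma fpush_snoc (l x : bool * bool) s :
  s <> [] -> exists s', fpush l (s ++ [x]) = s' ++ [x].
Proof.
  destruct s as [|h t]; intro N; [contradiction|].
  simpl. destruct (eq_dec h (fflip l)); [exists t | exists (l :: h :: t)]; reflexivity.
Qed.

Lemma rev_cons_not_nil {T} (x : T) s : rev s ++ [x] <> [].
Proof. destruct (rev s); discriminate. Qed.

Lemma begins_withb_fsnoc k v l :
  conj_validb k v = true -> exceptional k v l = false -> begins_withb k (fsnoc v l) = true.
Proof.
  unfold conj_validb, fsnoc. intros H Ex. apply andb_prop in H as [_ B].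
  destruct v as [|x [|y v'']].
  - destruct l as [[] e], k; simpl in *; congruence.
  - simpl. destruct (eq_dec x (fflip l)); [reflexivity | exact B].
  - destruct (fpush_snoc l x (rev (y :: v''))) as [s' E]; [apply rev_cons_not_nil|].
    change (rev (x :: y :: v'')) with (rev (y :: v'') ++ [x]).
    rewrite E, rev_app_distr. exact B.
Qed.

Lemma exceptional_fsnoc k v l :
  conj_validb k v = true -> exceptional k v l = false ->
  exceptional k (fsnoc v l) (fflip l) = false.
Proof.
  unfold conj_validb, fsnoc. intros H Ex. apply andb_prop in H as [_ B].
  destruct v as [|x [|y v'']].
  - destruct l as [[] e], k; simpl in *; congruence.
  - simpl. destruct (eq_dec x (fflip l)) as [->|]; [|reflexivity].
    destruct l as [[] e], k; simpl in *; congruence.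
  - destruct (fpush_snoc l x (rev (y :: v''))) as [s' E]; [apply rev_cons_not_nil|].
    change (rev (x :: y :: v'')) with (rev (y :: v'') ++ [x]).
    rewrite E, rev_app_distr. reflexivity.
Qed.

Lemma fsnoc_step k v l :
  conj_validb k v = true -> exceptional k v l = false ->
  conj_validb k (fsnoc v l) = true /\ exceptional k (fsnoc v l) (fflip l) = false /\
  fsnoc (fsnoc v l) (fflip l) = v.
Proof.
  intros V Ex. split; [|split; [apply exceptional_fsnoc; assumption|]].
  - unfold conj_validb. rewrite begins_withb_fsnoc by assumption.
    apply andb_prop in V as [R _]. apply reducedb_spec in R.
    rewrite andb_true_r. apply reducedb_spec. unfold fsnoc.
    apply reduced_rev, fpush_reduced, reduced_rev, R.
  - apply andb_prop in V as [R _]. apply reducedb_spec in R.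
    unfold fsnoc. rewrite rev_involutive, fpush_fflip, rev_involutive by apply reduced_rev, R.
    reflexivity.
Qed.

Lemma phi_conj_inverse k v l : feq (fsubst (phi (fflip l)) (phi_conj k v l)) [pos (conj_idx k v)].
Proof.
  unfold phi_conj. destruct (conj_validb k v) eqn:V.
  - destruct (exceptional k v l) eqn:Ex.
    + destruct v; [|discriminate].
      destruct k, l as [[] []]; simpl in Ex; try discriminate; vm_compute; reflexivity.
    + destruct (fsnoc_step k v l V Ex) as [V' [Ex' E]].
      rewrite fsubst_letter. unfold phi, pos; simpl. rewrite phi_idx_conj_idx.
      unfold phi_conj. rewrite V', Ex', E. reflexivity.
  - rewrite fsubst_letter. unfold phi, pos; simpl. rewrite phi_idx_conj_idx.
    unfold phi_conj. rewrite V. reflexivity.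
Qed.

Lemma phi_idx_inverse l b : feq (fsubst (phi (fflip l)) (phi_idx l b)) [pos b].
Proof.
  destruct b as [| |v|v].
  - destruct l as [[] []]; vm_compute; reflexivity.
  - destruct l as [[] []]; vm_compute; reflexivity.
  - apply (phi_conj_inverse true v l).
  - apply (phi_conj_inverse false v l).
Qed.

Lemma phi_inverse l w : feq (fsubst (phi (fflip l)) (fsubst (phi l) w)) w.
Proof.
  induction w as [|[b e] w IH]; [reflexivity|].
  change ((b, e) :: w) with ([(b, e)] ++ w). rewrite !fsubst_app, fsubst_letter.
  apply feq_app; [|exact IH]. unfold phi at 2; simpl. destruct e.
  - rewrite fsubst_finv by apply phi_inv_compatible.
    apply (feq_finv _ _ (phi_idx_inverse l b)).
  - apply phi_idx_inverse.
Qed.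

Lemma phi_stack_reduced l x : reduced (phi_stack l x).
Proof. apply freduce_nil_reduced. Qed.

Lemma phi_stack_inverse l x : reduced x -> phi_stack (fflip l) (phi_stack l x) = x.
Proof.
  intro R. unfold phi_stack at 1.
  rewrite (fsubst_feq (phi (fflip l)) _ (fsubst (phi l) (rev x)) (phi_inv_compatible _))
    by apply feq_rev_freduce.
  rewrite (phi_inverse l (rev x)). apply freduce_rev_reduced, R.
Qed.

Definition valid_letter (x : idx * bool) : Prop := valid_idxb (fst x) = true.

Lemma forallb_valid_letter w :
  forallb (fun x => valid_idxb (fst x)) w = true -> Forall valid_letter w.
Proof. intro H. apply Forall_forall; intros x Hx. rewrite forallb_forall in H. apply H, Hx. Qed.

Lemma phi_conj_valid k v l : conj_validb k v = true -> Forall valid_letter (phi_conj k v l).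
Proof.
  intro V. unfold phi_conj. rewrite V. destruct (exceptional k v l) eqn:Ex.
  - apply forallb_valid_letter. destruct v; [|discriminate].
    destruct k, l as [[] []]; reflexivity.
  - constructor; [|constructor]. unfold valid_letter; simpl.
    rewrite valid_idxb_conj_idx. apply (fsnoc_step k v l V Ex).
Qed.

Lemma phi_idx_valid l b : valid_idxb b = true -> Forall valid_letter (phi_idx l b).
Proof.
  destruct b as [| |v|v]; intro V.
  1,2: apply forallb_valid_letter; destruct l as [[] []]; reflexivity.
  - apply (phi_conj_valid true v l V).
  - apply (phi_conj_valid false v l V).
Qed.

Lemma phi_valid l x : valid_letter x -> Forall valid_letter (phi l x).
Proof.
  destruct x as [b e]. unfold valid_letter, phi; simpl. intro V.
  pose proof (phi_idx_valid l b V) as K. destruct e; [|exact K].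
  apply Forall_rev, Forall_map. eapply Forall_impl; [|exact K]. intros [b' e']; auto.
Qed.

Lemma phi_stack_valid l x : Forall valid_letter x -> Forall valid_letter (phi_stack l x).
Proof.
  intro F. apply freduce_Forall; [constructor|].
  apply fsubst_Forall; [apply phi_valid | apply Forall_rev, F].
Qed.

(** * Words in V_1 and in the basis *)

Definition lam1 (c : bool) : word := if c then lam21 else lam12.
Definition lam_letter (l : bool * bool) : word := pw (lam1 (fst l)) (snd l).
Definition ev {A : Type} (F : A -> word) (w : list (A * bool)) : word :=
  flat_map (fun x => pw (F (fst x)) (snd x)) w.

Section Evaluation.
Context {A : Type} `{EqDecision A} (F : A -> word).

Lemma ev_app u v : ev F (u ++ v) = ev F u ++ ev F v.
Proof. apply flat_map_app. Qed.

Lemma ev_letter x : ev F [x] = pw (F (fst x)) (snd x).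
Proof. apply app_nil_r. Qed.

Lemma ev_finv w : ev F (finv w) = inv_word (ev F w).
Proof.
  induction w as [|x w IH]; [reflexivity|].
  change (finv (x :: w)) with (finv w ++ [fflip x]).
  rewrite ev_app, IH, ev_letter.
  change (ev F (x :: w)) with (pw (F (fst x)) (snd x) ++ ev F w).
  rewrite inv_word_app, <- pw_negb. reflexivity.
Qed.

Lemma ev_fpush s z : vb_eq (ev F (rev s) ++ pw (F (fst z)) (snd z)) (ev F (rev (fpush z s))).
Proof.
  destruct s as [|h s']; [rewrite <- ev_letter; reflexivity|].
  unfold fpush. destruct (eq_dec h (fflip z)) as [->|_].
  - simpl rev. rewrite ev_app, ev_letter. simpl.
    rewrite pw_negb, <- app_assoc, vb_app_inv_l, app_nil_r. reflexivity.
  - change (rev (z :: h :: s')) with (rev (h :: s') ++ [z]).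
    rewrite ev_app, ev_letter. reflexivity.
Qed.

Lemma ev_freduce w : vb_eq (ev F w) (ev F (rev (freduce [] w))).
Proof.
  induction w as [|z w IH] using rev_ind; [reflexivity|].
  rewrite ev_app, ev_letter, IH, ev_fpush, freduce_app. reflexivity.
Qed.

End Evaluation.

Lemma inv_eval_f v : inv_word (eval_f v) = eval_f (finv v).
Proof. symmetry; apply (ev_finv lam1). Qed.

Lemma basis_conj_idx k v :
  basis (conj_idx k v) = inv_word (eval_f v) ++ (if k then lam31 else lam32) ++ eval_f v.
Proof. destruct k; reflexivity. Qed.

(** * Certified identities in VB_3 *)

Inductive lam_kind := LamV1 (c : bool) | LamV2 (b : idx) | LamTriv.

(* [lam_ij i j] classifies lam_{i+1, j+1} (the trivial element when i = j). *)
Definition lam_ij (i j : nat) : lam_kind :=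
  match i, j with
  | 0, 1 => LamV1 false | 1, 0 => LamV1 true
  | 0, 2 => LamV2 I13 | 1, 2 => LamV2 I23
  | 2, 0 => LamV2 (I31 []) | 2, 1 => LamV2 (I32 [])
  | _, _ => LamTriv
  end.

Definition lam_word (v : lam_kind) (e : bool) : word :=
  match v with
  | LamV1 c => pw (lam1 c) e
  | LamV2 b => pw (basis b) e
  | LamTriv => []
  end.

Definition perm3 := (nat * nat * nat)%type.

Definition all_perms : list perm3 :=
  [(0,1,2); (1,0,2); (0,2,1); (2,0,1); (1,2,0); (2,1,0)].
Definition all_letters : list letter :=
  [(s1,false); (s1,true); (s2,false); (s2,true); (r1,false); (r1,true); (r2,false); (r2,true)].

Definition perm_word (p : perm3) : word :=
  match p with
  | (1,0,2) => G r1
  | (0,2,1) => G r2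
  | (2,0,1) => G r2 ++ G r1
  | (1,2,0) => G r1 ++ G r2
  | (2,1,0) => G r1 ++ G r2 ++ G r1
  | _ => []
  end.

Definition perm_after (z : letter) (p : perm3) : perm3 :=
  let '(a, b, c) := p in
  match fst z with s1 | r1 => (b, a, c) | s2 | r2 => (a, c, b) end.

(* [perm_word p ++ [z]] equals [lam_word v e ++ perm_word (perm_after z p)],
   where [lam_of_letter z p = Some (v, e)] (or [None] for a rho letter). *)
Definition lam_of_letter (z : letter) (p : perm3) : option (lam_kind * bool) :=
  let '(a, b, c) := p in
  match z with
  | (s1, false) => Some (lam_ij a b, true)
  | (s1, true) => Some (lam_ij b a, false)
  | (s2, false) => Some (lam_ij b c, true)
  | (s2, true) => Some (lam_ij c b, false)
  | _ => None
  end.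

Definition perm_letter_rhs (p : perm3) (z : letter) : word :=
  match lam_of_letter z p with Some (v, e) => lam_word v e | None => [] end
  ++ perm_word (perm_after z p).

Definition lookup {K : Type} `{EqDecision K} (t : list (K * list (nat * nat))) (k : K) :=
  match find (fun e => if eq_dec (fst e) k then true else false) t with
  | Some e => snd e
  | None => []
  end.

Definition perm_letter_certs : list (perm3 * letter * list (nat * nat)) :=
  [ ((2,0,1), (r2,false), [(0,12)]);
    ((2,0,1), (r2,true), [(0,12)]);
    ((2,1,0), (r2,false), [(0,13)]);
    ((2,1,0), (r2,true), [(0,13)]);
    ((1,0,2), (s2,false), [(0,33); (2,12)]);
    ((1,0,2), (s2,true), [(0,40); (2,12)]);
    ((2,0,1), (s2,false), [(0,34)]);
    ((2,0,1), (s2,true), [(0,41)]);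
    ((1,2,0), (s1,false), [(0,38); (1,13)]);
    ((1,2,0), (s1,true), [(0,37); (1,13)]);
    ((1,2,0), (s2,false), [(0,13); (2,34)]);
    ((1,2,0), (s2,true), [(0,13); (2,41)]);
    ((2,1,0), (s1,false), [(0,13); (1,38)]);
    ((2,1,0), (s1,true), [(0,13); (1,37)]);
    ((2,1,0), (s2,false), [(1,34)]);
    ((2,1,0), (s2,true), [(1,41)]) ].

Lemma perm_word_letter p z : In p all_perms -> vb_eq (perm_word p ++ [z]) (perm_letter_rhs p z).
Proof.
  intro Hp. apply (certifies_vb_eq vp_pool (lookup perm_letter_certs (p, z))).
  { exact vp_pool_trivial. }
  assert (K : forallb (fun p => forallb (fun z =>
      certifies vp_pool (lookup perm_letter_certs (p, z))
        (perm_word p ++ [z]) (perm_letter_rhs p z))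
      all_letters) all_perms = true) by (vm_compute; reflexivity).
  rewrite forallb_forall in K. specialize (K p Hp). rewrite forallb_forall in K.
  apply K. destruct z as [[] []]; simpl; tauto.
Qed.

Definition conj_certs : list (idx * (bool * bool) * list (nat * nat)) :=
  [ (I13, l12, [(0,61)]);
    (I13, l12i, [(0,55)]);
    (I13, l21, [(0,76); (7,145)]);
    (I13, l21i, [(0,104); (0,164)]);
    (I23, l12, [(0,44); (6,49)]);
    (I23, l12i, [(0,70); (0,132)]);
    (I23, l21, [(0,156)]);
    (I23, l21i, [(0,150)]);
    (I31 [], l12, [(0,93)]);
    (I31 [], l12i, [(0,184)]);
    (I32 [], l21, [(0,157)]);
    (I32 [], l21i, [(0,149)]) ].

Lemma conj_certified b l : In (b, l) (map fst conj_certs) ->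
  vb_eq (basis b ++ lam_letter l) (lam_letter l ++ eval_idx (phi_idx l b)).
Proof.
  intro H. apply in_map_iff in H as [[[b' l'] st] [E Hin]]. simpl in E. inversion E; subst.
  apply (certifies_vb_eq vp_pool st); [exact vp_pool_trivial|].
  assert (K : forallb (fun e => let '(b, l, st) := e in
      certifies vp_pool st (basis b ++ lam_letter l) (lam_letter l ++ eval_idx (phi_idx l b)))
      conj_certs = true) by (vm_compute; reflexivity).
  rewrite forallb_forall in K. exact (K _ Hin).
Qed.

Lemma conj_identity_conj k v l : conj_validb k v = true ->
  vb_eq (basis (conj_idx k v) ++ lam_letter l) (lam_letter l ++ eval_idx (phi_conj k v l)).
Proof.
  intro V. unfold phi_conj. rewrite V. destruct (exceptional k v l) eqn:Ex.
  - destruct v; [|discriminate].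
    destruct k, l as [[] []]; simpl in Ex; try discriminate;
      lazymatch goal with |- vb_eq (basis ?b ++ lam_letter ?l) _ =>
        exact (conj_certified b l ltac:(simpl; tauto)) end.
  - change (eval_idx [pos (conj_idx k (fsnoc v l))]) with (ev basis [pos (conj_idx k (fsnoc v l))]).
    rewrite ev_letter. cbn [fst snd pos pw]. rewrite !basis_conj_idx.
    assert (K : vb_eq (eval_f (fsnoc v l)) (eval_f v ++ lam_letter l)).
    { unfold fsnoc. change eval_f with (ev lam1).
      rewrite <- ev_fpush, rev_involutive. reflexivity. }
    rewrite K, inv_word_app, <- !app_assoc, (app_assoc (lam_letter l)), vb_app_inv_r.
    reflexivity.
Qed.

Lemma conj_identity l b : valid_idxb b = true ->
  vb_eq (basis b ++ lam_letter l) (lam_letter l ++ eval_idx (phi_idx l b)).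
Proof.
  intro V. destruct b as [| |v|v].
  1,2: destruct l as [[] []]; apply conj_certified; simpl; tauto.
  - apply (conj_identity_conj true v l V).
  - apply (conj_identity_conj false v l V).
Qed.

Lemma conj_identity_letter l z : valid_letter z ->
  vb_eq (ev basis [z] ++ lam_letter l) (lam_letter l ++ ev basis (phi l z)).
Proof.
  destruct z as [b e]. intro V. rewrite ev_letter. unfold phi. cbn [fst snd].
  pose proof (conj_identity l b V) as Hb. destruct e; [|exact Hb]. cbn [pw].
  rewrite ev_finv. fold (eval_idx (phi_idx l b)).
  set (X := basis b) in *. set (Y := eval_idx (phi_idx l b)) in *. set (L := lam_letter l) in *.
  assert (H1 : vb_eq (inv_word (X ++ L)) (inv_word (L ++ Y))) by (rewrite Hb; reflexivity).
  rewrite !inv_word_app in H1.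
  transitivity (L ++ (inv_word L ++ inv_word X) ++ L).
  - rewrite <- (app_assoc (inv_word L) (inv_word X) L), (app_assoc L (inv_word L)), vb_app_inv_r.
    reflexivity.
  - rewrite H1, <- app_assoc, vb_app_inv_l, app_nil_r. reflexivity.
Qed.

Lemma conj_identity_word l w : Forall valid_letter w ->
  vb_eq (ev basis w ++ lam_letter l) (lam_letter l ++ ev basis (fsubst (phi l) w)).
Proof.
  induction 1 as [|z w Hz Hw IH]; [simpl; rewrite app_nil_r; reflexivity|].
  change (z :: w) with ([z] ++ w). rewrite ev_app, fsubst_app, fsubst_letter, ev_app.
  rewrite <- app_assoc, IH, app_assoc, conj_identity_letter by exact Hz.
  rewrite <- app_assoc. reflexivity.
Qed.

(** * The action on normal forms *)

(* A state ((y, x), p) stands for [ev lam1 (rev y) ++ eval_idx (rev x) ++ perm_word p]. *)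
Definition state := (fword * list (idx * bool) * perm3)%type.

Definition act_lam (v : lam_kind) (e : bool) (yx : fword * list (idx * bool)) :=
  let (y, x) := yx in
  match v with
  | LamV1 c => (fpush (c, e) y, phi_stack (c, e) x)
  | LamV2 b => (y, fpush (b, e) x)
  | LamTriv => (y, x)
  end.

Definition act_letter (z : letter) (s : state) : state :=
  let (yx, p) := s in
  (match lam_of_letter z p with Some (v, e) => act_lam v e yx | None => yx end,
   perm_after z p).

Definition act (w : word) (s : state) : state := fold_left (fun s z => act_letter z s) w s.

Definition good_state (s : state) : Prop :=
  reduced (fst (fst s)) /\ reduced (snd (fst s)) /\ In (snd s) all_perms.

Lemma act_app u v s : act (u ++ v) s = act v (act u s).
Proof. apply fold_left_app. Qed.

Lemma perm_after_all_perms z p : In p all_perms -> In (perm_after z p) all_perms.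
Proof.
  intro H. destruct z as [g e]. simpl in H.
  repeat (destruct H as [<-|H]; [destruct g; simpl; tauto|]). contradiction.
Qed.

Lemma act_letter_good z s : good_state s -> good_state (act_letter z s).
Proof.
  destruct s as [[y x] p]. unfold good_state; simpl. intros [Ry [Rx Hp]].
  split; [|split; [|apply perm_after_all_perms, Hp]];
    destruct (lam_of_letter z p) as [[[c|b|] e]|]; simpl;
    auto using fpush_reduced, phi_stack_reduced.
Qed.

Lemma act_good w s : good_state s -> good_state (act w s).
Proof.
  revert s; induction w as [|z w IH]; intros s H; [exact H|]. apply IH, act_letter_good, H.
Qed.

Lemma act_letter_flip z s : good_state s -> act_letter (flip z) (act_letter z s) = s.
Proof.
  destruct s as [[y x] p]. intros [Ry [Rx _]]. simpl in Ry, Rx.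
  assert (Hp : perm_after (flip z) (perm_after z p) = p)
    by (destruct p as [[a b] c], z as [[] []]; reflexivity).
  assert (Hl : lam_of_letter (flip z) (perm_after z p) =
    match lam_of_letter z p with Some (v, e) => Some (v, negb e) | None => None end)
    by (destruct p as [[a b] c], z as [[] []]; reflexivity).
  unfold act_letter. rewrite Hl, Hp.
  destruct (lam_of_letter z p) as [[[c|b|] e]|]; simpl.
  - change (c, negb e) with (fflip (c, e)). rewrite fpush_fflip, phi_stack_inverse; auto.
  - change (b, negb e) with (fflip (b, e)). rewrite fpush_fflip; auto.
  - reflexivity.
  - reflexivity.
Qed.

(* The effect of a word on a state factors through its sequence of lam-letters;
   [v1_part] and [v2_part] compute the resulting V_1-factor and V_2^*-factor. *)
Fixpoint lam_sequence (w : word) (p : perm3) : list (lam_kind * bool) * perm3 :=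
  match w with
  | [] => ([], p)
  | z :: w' =>
      let (L, p') := lam_sequence w' (perm_after z p) in
      (match lam_of_letter z p with Some ve => ve :: L | None => L end, p')
  end.

Definition act_lams (L : list (lam_kind * bool)) (yx : fword * list (idx * bool)) :=
  fold_left (fun yx ve => act_lam (fst ve) (snd ve) yx) L yx.

Fixpoint v1_part (L : list (lam_kind * bool)) : fword :=
  match L with
  | [] => []
  | (LamV1 c, e) :: L' => (c, e) :: v1_part L'
  | _ :: L' => v1_part L'
  end.

Fixpoint v2_part (L : list (lam_kind * bool)) : list (idx * bool) :=
  match L with
  | [] => []
  | (LamV2 b, e) :: L' => phi_iter (v1_part L') [(b, e)] ++ v2_part L'
  | _ :: L' => v2_part L'
  end.

Lemma act_lam_sequence w yx p :
  act w (yx, p) = (act_lams (fst (lam_sequence w p)) yx, snd (lam_sequence w p)).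
Proof.
  revert yx p; induction w as [|z w IH]; intros yx p; [reflexivity|].
  simpl. rewrite IH. destruct (lam_sequence w (perm_after z p)) as [L p'].
  destruct (lam_of_letter z p) as [[v e]|]; reflexivity.
Qed.

Lemma phi_iter_app ls a b : phi_iter ls (a ++ b) = phi_iter ls a ++ phi_iter ls b.
Proof.
  revert a b; induction ls as [|l ls IH]; intros a b; [reflexivity|].
  unfold phi_iter; simpl. rewrite fsubst_app. apply IH.
Qed.

Lemma phi_iter_feq ls u v : feq u v -> feq (phi_iter ls u) (phi_iter ls v).
Proof.
  revert u v; induction ls as [|l ls IH]; intros u v E; [exact E|].
  apply IH, fsubst_feq; [apply phi_inv_compatible | exact E].
Qed.

Lemma phi_iter_snoc ls l w : phi_iter (ls ++ [l]) w = fsubst (phi l) (phi_iter ls w).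
Proof. apply fold_left_app. Qed.

Lemma phi_iter_freduce ls w : feq (phi_iter ls w) (phi_iter (rev (freduce [] ls)) w).
Proof.
  induction ls as [|l ls IH] using rev_ind; [reflexivity|].
  rewrite phi_iter_snoc, freduce_app.
  change (freduce (freduce [] ls) [l]) with (fpush l (freduce [] ls)).
  apply (fsubst_feq (phi l)) in IH; [|apply phi_inv_compatible].
  unfold feq in *. rewrite IH. clear IH.
  destruct (freduce [] ls) as [|h t']; [reflexivity|].
  unfold fpush. destruct (eq_dec h (fflip l)) as [->|_].
  - simpl rev. rewrite phi_iter_snoc.
    pose proof (phi_inverse (fflip l) (phi_iter (rev t') w)) as K.
    rewrite fflip_involutive in K. exact K.
  - change (rev (l :: h :: t')) with (rev (h :: t') ++ [l]). rewrite phi_iter_snoc. reflexivity.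
Qed.

Lemma phi_iter_trivial ls w : freduce [] ls = [] -> feq (phi_iter ls w) w.
Proof. intro E. unfold feq. rewrite (phi_iter_freduce ls w), E. reflexivity. Qed.

Lemma feq_fpush z x : reduced x -> feq (rev (fpush z x)) (rev x ++ [z]).
Proof.
  intro R. unfold feq. rewrite freduce_rev_reduced by (apply fpush_reduced, R).
  rewrite freduce_app, freduce_rev_reduced by exact R. reflexivity.
Qed.

Lemma act_lams_eq L y x : reduced x ->
  act_lams L (y, x) =
  (freduce y (v1_part L), freduce [] (phi_iter (v1_part L) (rev x) ++ v2_part L)).
Proof.
  revert y x; induction L as [|[v e] L IH]; intros y x R.
  - simpl. rewrite app_nil_r, freduce_rev_reduced by exact R. reflexivity.
  - destruct v as [c|b|]; simpl.
    + rewrite IH by apply phi_stack_reduced. f_equal.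
      apply feq_app; [|reflexivity]. unfold phi_iter at 2; simpl.
      fold (phi_iter (v1_part L) (fsubst (phi (c, e)) (rev x))).
      apply phi_iter_feq, feq_rev_freduce.
    + rewrite IH by (apply fpush_reduced, R). f_equal.
      rewrite app_assoc, <- phi_iter_app. apply feq_app; [|reflexivity].
      apply phi_iter_feq, feq_fpush, R.
    + apply IH, R.
Qed.

Definition relators_act_trivially : bool :=
  forallb (fun r => forallb (fun p =>
     let (L, p') := lam_sequence r p in
     (if eq_dec p' p then true else false)
     && (if eq_dec (freduce [] (v1_part L)) [] then true else false)
     && (if eq_dec (freduce [] (v2_part L)) [] then true else false))
     all_perms) relators.

Lemma act_relator r s : In r relators -> good_state s -> act r s = s.
Proof.
  intros Hr Hs. destruct s as [[y x] p]. destruct Hs as [Ry [Rx Hp]]; simpl in *.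
  assert (K : relators_act_trivially = true) by (vm_compute; reflexivity).
  unfold relators_act_trivially in K. rewrite forallb_forall in K.
  specialize (K r Hr). rewrite forallb_forall in K. specialize (K p Hp).
  rewrite act_lam_sequence, act_lams_eq by exact Rx.
  destruct (lam_sequence r p) as [L p']. simpl.
  destruct (eq_dec p' p) as [->|]; [|discriminate].
  destruct (eq_dec (freduce [] (v1_part L)) []) as [E1|]; [|discriminate].
  destruct (eq_dec (freduce [] (v2_part L)) []) as [E2|]; [|discriminate].
  rewrite freduce_rev_freduce, E1 by exact Ry. f_equal; f_equal.
  transitivity (freduce [] (rev x ++ [])).
  - apply feq_app; [apply phi_iter_trivial, E1 | unfold feq; rewrite E2; reflexivity].
  - rewrite app_nil_r. apply freduce_rev_reduced, Rx.
Qed.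

Lemma act_vb_eq u v : vb_eq u v -> forall s, good_state s -> act u s = act v s.
Proof.
  induction 1; intros s Hs.
  - reflexivity.
  - symmetry; auto.
  - rewrite IHvb_eq1 by exact Hs. apply IHvb_eq2, Hs.
  - rewrite !act_app. simpl. rewrite act_letter_flip by (apply act_good, Hs). reflexivity.
  - rewrite !act_app, (act_relator r); auto. apply act_good, Hs.
Qed.

(** * Freeness *)

Definition id_perm : perm3 := (0, 1, 2).
Definition init_state : state := (([], []), id_perm).

Lemma init_state_good : good_state init_state.
Proof. unfold good_state; simpl; tauto. Qed.

Lemma act_inv_word w s : good_state s -> act (inv_word w) (act w s) = s.
Proof. intro Hs. rewrite <- act_app, (act_vb_eq _ [] (vb_app_inv_r w) s Hs). reflexivity. Qed.

Definition phi_stack_iter (v : fword) (x : list (idx * bool)) : list (idx * bool) :=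
  fold_left (fun x l => phi_stack l x) v x.

Lemma act_eval_f v y x :
  act (eval_f v) ((y, x), id_perm) = ((freduce y v, phi_stack_iter v x), id_perm).
Proof.
  revert y x; induction v as [|[c e] v IH]; intros y x; [reflexivity|].
  change (eval_f ((c, e) :: v)) with (pw (lam1 c) e ++ eval_f v).
  assert (K : act (pw (lam1 c) e) ((y, x), id_perm)
              = ((fpush (c, e) y, phi_stack (c, e) x), id_perm)) by (destruct c, e; reflexivity).
  rewrite act_app, K, IH. reflexivity.
Qed.

Lemma phi_stack_iter_eq v x : reduced x -> phi_stack_iter v x = freduce [] (phi_iter v (rev x)).
Proof.
  revert x; induction v as [|l v IH]; intros x R.
  - symmetry; apply freduce_rev_reduced, R.
  - change (phi_stack_iter (l :: v) x) with (phi_stack_iter v (phi_stack l x)).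
    rewrite IH by apply phi_stack_reduced.
    change (phi_iter (l :: v) (rev x)) with (phi_iter v (fsubst (phi l) (rev x))).
    apply phi_iter_feq, feq_rev_freduce.
Qed.

Lemma conj_validb_snoc k v l : conj_validb k (v ++ [l]) = true ->
  conj_validb k v = true /\ exceptional k v l = false /\ fsnoc v l = v ++ [l].
Proof.
  unfold conj_validb. intro H. apply andb_prop in H as [R B]. apply reducedb_spec in R.
  apply reduced_rev in R. rewrite rev_app_distr in R. simpl in R.
  assert (E : fpush l (rev v) = l :: rev v).
  { destruct (rev v) as [|h t]; [reflexivity|]. apply reduced_cons2 in R as [R1 _].
    unfold fpush. destruct (eq_dec h (fflip l)); [contradiction | reflexivity]. }
  split; [|split].
  - apply andb_true_intro; split.
    + apply reducedb_spec. rewrite <- (rev_involutive v). apply reduced_rev.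
      eapply reduced_tail; exact R.
    + destruct v; [reflexivity | exact B].
  - destruct v as [|x v']; [|reflexivity].
    destruct l as [c e], c, k; simpl in *; congruence.
  - unfold fsnoc. rewrite E. simpl. rewrite rev_involutive. reflexivity.
Qed.

Lemma phi_iter_conj_idx k v : conj_validb k v = true ->
  feq (phi_iter v [pos (conj_idx k [])]) [pos (conj_idx k v)].
Proof.
  induction v as [|l v IH] using rev_ind; intro V; [reflexivity|].
  destruct (conj_validb_snoc k v l V) as [V' [Ex E]].
  rewrite phi_iter_snoc. unfold feq.
  rewrite (fsubst_feq (phi l) _ _ (phi_inv_compatible l) (IH V')).
  rewrite fsubst_letter. unfold phi, pos; simpl. rewrite phi_idx_conj_idx.
  unfold phi_conj. rewrite V', Ex, E. reflexivity.
Qed.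

Lemma act_basis_conj_idx k v x : conj_validb k v = true -> reduced x ->
  act (basis (conj_idx k v)) (([], x), id_perm) = (([], fpush (pos (conj_idx k v)) x), id_perm).
Proof.
  intros V R.
  assert (Hk : forall y x', act (if k then lam31 else lam32) ((y, x'), id_perm)
                          = ((y, fpush (pos (conj_idx k [])) x'), id_perm))
    by (intros; destruct k; reflexivity).
  rewrite basis_conj_idx, !act_app, inv_eval_f, act_eval_f, Hk, act_eval_f.
  f_equal. f_equal.
  - rewrite <- freduce_app. apply freduce_finv_app. simpl; trivial.
  - set (X1 := phi_stack_iter (finv v) x).
    assert (R1 : reduced X1) by (unfold X1; rewrite phi_stack_iter_eq by exact R;
                                 apply freduce_nil_reduced).
    assert (HX1 : feq (phi_iter v (rev X1)) (rev x)).
    { unfold X1, feq. rewrite phi_stack_iter_eq by exact R.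
      rewrite (phi_iter_feq v _ _ (feq_rev_freduce _)).
      unfold phi_iter at 1. rewrite <- fold_left_app.
      apply phi_iter_trivial, freduce_finv_app. simpl; trivial. }
    rewrite phi_stack_iter_eq by (apply fpush_reduced, R1).
    rewrite (phi_iter_feq v _ _ (feq_fpush _ X1 R1)), phi_iter_app.
    rewrite (feq_app _ _ _ _ HX1 (phi_iter_conj_idx k v V)).
    rewrite freduce_app, freduce_rev_reduced by exact R. reflexivity.
Qed.

Lemma act_basis b x : valid_idxb b = true -> reduced x ->
  act (basis b) (([], x), id_perm) = (([], fpush (pos b) x), id_perm).
Proof.
  intros V R. destruct b as [| |v|v]; [reflexivity | reflexivity | |].
  - apply (act_basis_conj_idx true v x V R).
  - apply (act_basis_conj_idx false v x V R).
Qed.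

Lemma act_basis_letter b e x : valid_idxb b = true -> reduced x ->
  act (pw (basis b) e) (([], x), id_perm) = (([], fpush (b, e) x), id_perm).
Proof.
  intros V R. destruct e; [|apply act_basis; assumption].
  assert (K : act (basis b) (([], fpush (b, true) x), id_perm) = (([], x), id_perm)).
  { rewrite act_basis by (try apply fpush_reduced; assumption).
    change (pos b) with (fflip (b, true)). rewrite fpush_fflip by exact R. reflexivity. }
  simpl pw. rewrite <- K at 1. apply act_inv_word.
  unfold good_state; simpl. split; [trivial | split; [apply fpush_reduced, R | tauto]].
Qed.

Lemma act_eval_idx l x : Forall valid_letter l -> reduced x ->
  act (eval_idx l) (([], x), id_perm) = (([], freduce x l), id_perm).
Proof.
  revert x; induction l as [|[b e] l IH]; intros x F R; [reflexivity|].
  inversion F as [|? ? Vb Fl]; subst.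
  change (eval_idx ((b, e) :: l)) with (pw (basis b) e ++ eval_idx l).
  rewrite act_app, act_basis_letter by assumption. apply IH; [exact Fl | apply fpush_reduced, R].
Qed.

Lemma valid_letters (l : list (idx * bool)) :
  Forall (fun x => valid_idx (fst x)) l -> Forall valid_letter l.
Proof. apply Forall_impl. intros x; apply valid_idxb_spec. Qed.

Lemma freeness (l : list (idx * bool)) :
  Forall (fun x => valid_idx (fst x)) l -> reduced l -> l <> [] -> ~ vb_eq (eval_idx l) [].
Proof.
  intros F R N E.
  pose proof (act_vb_eq _ _ E init_state init_state_good) as K.
  unfold init_state in K. rewrite act_eval_idx in K by (apply valid_letters in F; simpl; auto).
  injection K as K. rewrite freduce_reduced_eq in K by exact R.
  apply N. rewrite <- (rev_involutive l), K. reflexivity.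
Qed.

(** * Generation *)

Definition lam_kind_valid (v : lam_kind) : Prop :=
  match v with LamV2 b => valid_idxb b = true | _ => True end.

Lemma lam_of_letter_valid z p :
  match lam_of_letter z p with Some (v, _) => lam_kind_valid v | None => True end.
Proof.
  assert (Hij : forall i j, lam_kind_valid (lam_ij i j))
    by (intros [|[|[|i]]] [|[|[|j]]]; simpl; auto).
  destruct p as [[a b] c], z as [[] []]; simpl; auto.
Qed.

Definition state_word (s : state) : word :=
  ev lam1 (rev (fst (fst s))) ++ eval_idx (rev (snd (fst s))) ++ perm_word (snd s).

Definition valid_state (s : state) : Prop := good_state s /\ Forall valid_letter (snd (fst s)).

Lemma act_letter_valid z s : valid_state s -> valid_state (act_letter z s).
Proof.
  intros [G F]. split; [apply act_letter_good, G|].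
  destruct s as [[y x] p]. simpl in *. pose proof (lam_of_letter_valid z p) as K.
  destruct (lam_of_letter z p) as [[[c|b|] e]|]; simpl; auto.
  - apply phi_stack_valid, F.
  - apply fpush_Forall; auto.
Qed.

Lemma act_lam_vb_eq v e y x : reduced x -> Forall valid_letter x -> lam_kind_valid v ->
  vb_eq (ev lam1 (rev y) ++ eval_idx (rev x) ++ lam_word v e)
        (ev lam1 (rev (fst (act_lam v e (y, x)))) ++ eval_idx (rev (snd (act_lam v e (y, x))))).
Proof.
  intros R F Hv. destruct v as [c|b|]; simpl.
  - change (pw (lam1 c) e) with (lam_letter (c, e)).
    rewrite (conj_identity_word (c, e) _ (Forall_rev F)).
    unfold phi_stack. change eval_idx with (ev basis). rewrite <- ev_freduce, app_assoc.
    apply vb_eq_app_r, (ev_fpush lam1 y (c, e)).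
  - change eval_idx with (ev basis). rewrite (ev_fpush basis x (b, e)). reflexivity.
  - rewrite app_nil_r. reflexivity.
Qed.

Lemma state_word_act_letter z s : valid_state s ->
  vb_eq (state_word s ++ [z]) (state_word (act_letter z s)).
Proof.
  destruct s as [[y x] p]. intros [[Ry [Rx Hp]] F]. simpl in Ry, Rx, Hp, F.
  unfold state_word. cbn [fst snd act_letter].
  rewrite <- !app_assoc, (perm_word_letter p z Hp). unfold perm_letter_rhs.
  pose proof (lam_of_letter_valid z p) as K.
  destruct (lam_of_letter z p) as [[v e]|]; cbn [fst snd]; [|reflexivity].
  rewrite !app_assoc, <- (app_assoc (ev lam1 (rev y))), act_lam_vb_eq by assumption.
  reflexivity.
Qed.

Lemma state_word_act w :
  vb_eq w (state_word (act w init_state)) /\ valid_state (act w init_state).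
Proof.
  induction w as [|z w [E V]] using rev_ind.
  - split; [reflexivity | split; [apply init_state_good | constructor]].
  - rewrite act_app. change (act [z] ?s) with (act_letter z s).
    split; [|apply act_letter_valid, V].
    rewrite <- state_word_act_letter by exact V. apply vb_eq_app_r, E.
Qed.

Lemma act_v2_independent w y x x' p :
  fst (fst (act w ((y, x), p))) = fst (fst (act w ((y, x'), p))) /\
  snd (act w ((y, x), p)) = snd (act w ((y, x'), p)).
Proof.
  revert y x x' p; induction w as [|z w IH]; intros y x x' p; [auto|].
  change (act (z :: w) ?s) with (act w (act_letter z s)). unfold act_letter.
  destruct (lam_of_letter z p) as [[[c|b|] e]|]; simpl; apply IH.
Qed.

Definition perm_at (p : perm3) (k : nat) : nat :=
  let '(a, b, c) := p in match k with 0 => a | 1 => b | 2 => c | _ => k end.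

Lemma act_perm_at w s k : perm_at (snd (act w s)) k = perm_at (snd s) (word_perm (rev w) k).
Proof.
  revert k; induction w as [|z w IH] using rev_ind; intro k; [reflexivity|].
  rewrite act_app, rev_app_distr. simpl act at 1. destruct (act w s) as [yx p].
  unfold act_letter. simpl snd.
  replace (perm_at (perm_after z p) k) with (perm_at p (gen_perm (fst z) k))
    by (destruct p as [[a b] c], z as [[] e], k as [|[|[|k]]]; reflexivity).
  exact (IH (gen_perm (fst z) k)).
Qed.

Lemma word_perm_map_flip g k : word_perm (map flip g) k = word_perm g k.
Proof. revert k; induction g as [|[a b] g IH]; intro k; simpl; auto. Qed.

Lemma act_inv_VP3_perm g s : in_VP3 g -> snd s = id_perm -> snd (act (inv_word g) s) = id_perm.
Proof.
  intros Hg Hs.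
  assert (K : forall k, k < 3 -> perm_at (snd (act (inv_word g) s)) k = k).
  { intros k Hk. rewrite act_perm_at, Hs. unfold inv_word.
    rewrite rev_involutive, word_perm_map_flip, Hg by exact Hk.
    destruct k as [|[|[|k]]]; [reflexivity.. | lia]. }
  destruct (snd (act (inv_word g) s)) as [[a b] c].
  specialize (K 0 ltac:(lia)) as K0; specialize (K 1 ltac:(lia)) as K1;
  specialize (K 2 ltac:(lia)) as K2. simpl in *. subst. reflexivity.
Qed.

Lemma act_V2_generator h e y x : In h V2_gens ->
  exists b, act (pw h e) ((y, x), id_perm) = ((y, fpush (b, e) x), id_perm).
Proof.
  intro Hh. simpl in Hh.
  destruct Hh as [<-|[<-|[<-|[<-|[]]]]];
    [exists I13 | exists I23 | exists (I31 []) | exists (I32 [])]; destruct e; reflexivity.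
Qed.

Lemma act_V2star w : in_V2star w -> exists x, act w init_state = (([], x), id_perm).
Proof.
  induction 1 as [|w h e g Hw [x Ex] Hh Hg|u v E Hu [x Ex]].
  - exists []; reflexivity.
  - assert (G : good_state (([], x), id_perm))
      by (rewrite <- Ex; apply act_good, init_state_good).
    unfold conj. rewrite !act_app, Ex.
    destruct (act (inv_word g) (([], x), id_perm)) as [[y1 x1] p1] eqn:E1.
    assert (Hp1 : p1 = id_perm).
    { change p1 with (snd ((y1, x1), p1)). rewrite <- E1. apply act_inv_VP3_perm; auto. }
    subst p1.
    destruct (act_V2_generator h e y1 x1 Hh) as [b Eb]. rewrite Eb.
    destruct (act_v2_independent g y1 (fpush (b, e) x1) x1 id_perm) as [K1 K2].
    assert (K : act g ((y1, x1), id_perm) = (([], x), id_perm))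
      by (rewrite <- E1, <- act_app, (act_vb_eq _ [] (vb_app_inv_l g) _ G); reflexivity).
    rewrite K in K1, K2. simpl in K1, K2.
    destruct (act g ((y1, fpush (b, e) x1), id_perm)) as [[y2 x2] p2]. simpl in K1, K2.
    subst. exists x2; reflexivity.
  - exists x. rewrite <- Ex. symmetry. apply act_vb_eq; [exact E | apply init_state_good].
Qed.

Lemma generation w : in_V2star w ->
  exists l : list (idx * bool), Forall (fun x => valid_idx (fst x)) l /\ vb_eq w (eval_idx l).
Proof.
  intro Hw. destruct (act_V2star w Hw) as [x Ex].
  destruct (state_word_act w) as [E [_ F]]. rewrite Ex in E, F. simpl in F.
  exists (rev x). split.
  - apply Forall_rev. eapply Forall_impl; [|exact F]. intros [b e]; apply valid_idxb_spec.
  - rewrite E. unfold state_word. simpl. rewrite app_nil_r. reflexivity.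
Qed.

Lemma word_perm_app a b k : word_perm (a ++ b) k = word_perm b (word_perm a k).
Proof. revert k; induction a as [|z a IH]; intro k; simpl; auto. Qed.

Lemma eval_f_VP3 v : in_VP3 (eval_f v).
Proof.
  intros k _. revert k; induction v as [|[c e] v IH]; intro k; [reflexivity|].
  change (eval_f ((c, e) :: v)) with (pw (lam1 c) e ++ eval_f v).
  rewrite word_perm_app, IH. destruct c, e, k as [|[|k]]; reflexivity.
Qed.

Lemma basis_in_V2star i : in_V2star (basis i).
Proof.
  assert (Hc : forall h g, In h V2_gens -> in_VP3 g -> in_V2star (conj h g))
    by (intros h g Hh Hg; exact (v2s_cons [] h false g v2s_nil Hh Hg)).
  destruct i as [| |v|v].
  - apply (v2s_eq (conj lam13 [])); [apply vb_refl|].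
    apply Hc; [simpl; tauto | intros k _; reflexivity].
  - apply (v2s_eq (conj lam23 [])); [apply vb_refl|].
    apply Hc; [simpl; tauto | intros k _; reflexivity].
  - apply Hc; [simpl; tauto | apply eval_f_VP3].
  - apply Hc; [simpl; tauto | apply eval_f_VP3].
Qed.

Theorem lemma3 :
  (* every basis element lies in V_2^* *)
  (forall i, valid_idx i -> in_V2star (basis i)) /\
  (* the basis generates V_2^* *)
  (forall w, in_V2star w ->
     exists l : list (idx * bool),
       Forall (fun x => valid_idx (fst x)) l /\ vb_eq w (eval_idx l)) /\
  (* freeness: no nontrivial reduced word in the basis is trivial in VB_3 *)
  (forall l : list (idx * bool),
     Forall (fun x => valid_idx (fst x)) l -> reduced l -> l <> [] ->
     ~ vb_eq (eval_idx l) []).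
Proof.
  split; [intros i _; apply basis_in_V2star | split; [exact generation | exact freeness]].
Qed.
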